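(* Let $G$ be a simple 2-connected plane graph whose unbounded face $p_\infty$ has $V_\infty$ vertices. Let $(a,b)$ be an admissible state such that (1) $b_v=b_{v'}=1$ for some edge $vv'$ on the boundary of $p_\infty$; (2) $a_p+b_p=0$ for every bounded face $p$; (3) $(b_{v_1}-b_p)(b_{v_2}-b_p)=0$ for every bounded face $p$ and every edge $v_1v_2$ on the boundary of $p$. Then $b_w\ge1$ for every vertex $w$, $a_p=-1$ for every bounded face $p$, and $B(a,b)\ge 2+V_\infty$.
   Context: A simple 2-connected plane graph $G$ is a simple 2-connected planar graph with a fixed embedding in the plane, so every face is bounded by a cycle. For a face $p$, $l(p)$ is the number of edges on its boundary and $v\in p$ means $v$ lies on the boundary of $p$. An admissible state $(a,b)$ assigns an integer $a_p$ to each bounded face $p$ and an integer $b_v$ to each vertex $v$ such that $a_p+b_v\ge 0$ whenever $p$ is bounded and $v\in p$, and $b_v\ge0$ for every vertex $v$ on $p_\infty$. For a bounded face $p$, $b_p=\min_{v\in p}b_v$. $B(a,b)=2\sum_{v}b_v+\sum_p (l(p)-2)a_p$, with $p$ over bounded faces and $v$ over all vertices. *)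

(* Plane graphs encoded combinatorially by rotation systems. *)
From HB Require Import structures.
From mathcomp Require Import all_boot all_order all_algebra.
Set Implicit Arguments. Unset Strict Implicit. Unset Printing Implicit Defensive.
Import Order.TTheory GRing.Theory Num.Theory.

Section PlaneGraph.
Variables (V : finType) (adj : rel V) (rot : V -> V -> V).

Definition darts : {set V * V} := [set d | adj d.1 d.2].

(* face-tracing permutation: after traversing (u,v), turn at v:
   next dart is (v, rot v u), where rot v is the cyclic order around v *)
Definition fnext (d : V * V) : V * V := (d.2, rot d.2 d.1).

(* the face (boundary walk) containing dart d, as its set of darts *)
Definition face_of (d : V * V) : {set V * V} := [set d' | fconnect fnext d d'].

Definition faces : {set {set V * V}} := [set face_of d | d in darts].

Definition face_vertices (p : {set V * V}) : {set V} := [set d.1 | d in p].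

Definition face_edges (p : {set V * V}) : {set {set V}} := [set [set d.1; d.2] | d in p].
Definition face_length (p : {set V * V}) : nat := #|face_edges p|.

Definition rotation_system : Prop :=
  [/\ symmetric adj, irreflexive adj,
      (forall v u, adj v u -> adj v (rot v u)),
      (forall v, {in [pred u | adj v u] &, injective (rot v)}) &
      (forall v u w, adj v u -> adj v w -> fconnect (rot v) u w)].

Definition two_connected : Prop :=
  [/\ 2 < #|V|,
      (forall u v, connect adj u v) &
      (forall x u v, u != x -> v != x ->
         connect [rel y z | [&& adj y z, y != x & z != x]] u v)].

(* genus 0 (Euler's formula V - E + F = 2, E = #darts / 2) *)
Definition genus0 : Prop := #|V| + #|faces| = (#|darts| %/ 2) + 2.

Definition plane_graph (pinf : {set V * V}) : Prop :=
  [/\ rotation_system, two_connected, genus0 & pinf \in faces].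

Definition bounded_faces (pinf : {set V * V}) : {set {set V * V}} := faces :\ pinf.

Local Open Scope ring_scope.

Definition admissible (pinf : {set V * V}) (a : {set V * V} -> int) (b : V -> int) : Prop :=
  (forall p, p \in bounded_faces pinf -> forall v, v \in face_vertices p -> 0 <= a p + b v)
  /\ (forall v, v \in face_vertices pinf -> 0 <= b v).

Definition bface (b : V -> int) (p : {set V * V}) : int :=
  match [pick v in face_vertices p] with
  | Some v0 => \big[Num.min/b v0]_(v in face_vertices p) b v
  | None => 0
  end.

Definition Bval (pinf : {set V * V}) (a : {set V * V} -> int) (b : V -> int) : int :=
  2 * (\sum_(v : V) b v)
  + \sum_(p in bounded_faces pinf) ((face_length p)%:Z - 2) * a p.

End PlaneGraph.

(* Call an edge uv good when b_u, b_v >= 1 and one of them equals 1.  By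
   hypothesis (3), on each edge of a bounded face p one endpoint realises b_p,
   so a single good edge on p forces b_p = 1 and makes all edges of p good.
   Around a vertex w consecutive edges share a face; when the unbounded face
   visits w at most once, all edges at w are therefore good together, and by
   connectivity the good edge given by hypothesis (1) makes every edge good.
   This yields b >= 1 everywhere and, with (2), a_p = -1 on bounded faces;
   Euler's formula then gives B(a, b) >= 2 + |p_oo|.

   The topological input, that a face of a 2-connected plane graph visits
   each vertex at most once, is derived from the genus inequality for
   combinatorial maps, z(s) + z(t) + z(ts) <= |T| + 2 c(s, t), proved below
   by induction on the number of 2-cycles of the involution t. *)

From HB Require Import structures.
From mathcomp Require Import all_boot all_order all_algebra.
From mathcomp Require Import all_fingroup zify.
Import Order.TTheory GRing.Theory Num.Theory.
Set Implicit Arguments. Unset Strict Implicit. Unset Printing Implicit Defensive.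

Lemma connect_propagate (T : finType) (r : rel T) (P : T -> Prop) x :
  P x -> (forall u v, P u -> r u v -> P v) -> forall y, connect r x y -> P y.
Proof.
move=> Px IH y /connectP [p pth ->]; elim: p x Px pth => //= z p IHp x Px.
by case/andP=> rxz pth; apply: IHp (IH _ _ Px rxz) pth.
Qed.

Lemma connect_neq_step (T : finType) (r : rel T) u z :
  u != z -> connect r u z -> exists v, r u v.
Proof.
move=> uz /connectP [[|v p] /= pth E]; first by rewrite E eqxx in uz.
by case/andP: pth => ruv _; exists v.
Qed.

(* Walking along f from f x, a property propagated by f at every point other
   than x holds everywhere: the first visit to any point comes no later than
   the return to x. *)
Lemma fconnect_ind_avoid (T : finType) (f : T -> T) (P : T -> Prop) x :
  P (f x) -> (forall z, z != x -> P z -> P (f z)) ->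
  forall y, fconnect f (f x) y -> P y.
Proof.
move=> Pfx step y fxy.
have reach : exists n, iter n f (f x) == y.
  by exists (findex f (f x) y); rewrite iter_findex.
have [n /eqP <- minn] := ex_minnP reach.
suff: forall k, k <= n -> P (iter k f (f x)) by apply.
elim=> [//|k IH] lkn; rewrite iterS; apply: step (IH (ltnW lkn)).
apply/eqP => Ek; have := minn (n - k.+1).
by rewrite -{2}(subnK lkn) iterD /= Ek eqxx => /(_ isT); lia.
Qed.

Section PermOrbits.
Variable T : finType.
Implicit Types (s : {perm T}) (S : {set T}).
Local Open Scope group_scope.

Lemma porbitS s z : porbit s (s z) = porbit s z.
Proof. by have := porbit_perm s 1 z; rewrite expg1. Qed.

Lemma porbit_fixed s z : s z = z -> porbit s z = [set z].
Proof.
move=> sz; apply/setP=> y; rewrite inE; apply/porbitP/eqP=> [[i ->]|->].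
  by elim: i => [|i IH]; rewrite ?expg0 ?perm1 // expgSr permM IH.
by exists 0; rewrite expg0 perm1.
Qed.

Lemma card_porbits1 : #|porbits (1 : {perm T})| = #|T|.
Proof.
rewrite /porbits card_in_imset // => x y _ _.
by rewrite !porbit_fixed ?perm1 // => /set1_inj.
Qed.

Lemma porbit_sub s S z :
  (forall u, u \in S -> s u \in S) -> z \in S -> porbit s z \subset S.
Proof.
move=> cl zS; apply/subsetP=> y /porbitP [i ->].
by elim: i => [|i IH]; rewrite ?expg0 ?perm1 // expgSr permM cl.
Qed.

Lemma porbit_partition s S :
  (forall u, u \in S -> s u \in S) -> partition (porbit s @: S) S.
Proof.
move=> cl; apply/and3P; split.
- apply/eqP/setP=> z; apply/bigcupP/idP => [[B /imsetP[u uS ->]]|zS].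
    exact/subsetP/porbit_sub.
  by exists (porbit s z); [apply: imset_f | apply: porbit_id].
- apply/trivIsetP=> _ _ /imsetP[u _ ->] /imsetP[v _ ->] neq.
  rewrite -setI_eq0; apply/set0Pn => -[z]; rewrite inE => /andP[zu zv].
  move/eqP: neq; apply; have /eqP <- : porbit s z == porbit s u by rewrite eq_porbit_mem.
  by apply/eqP; rewrite eq_porbit_mem.
- by apply/imsetP=> -[u _ E]; have := porbit_id s u; rewrite -E inE.
Qed.

Lemma card_porbits_supp s S :
  (forall u, u \in S -> s u \in S) -> (forall u, u \notin S -> s u = u) ->
  #|porbits s| = #|porbit s @: S| + #|~: S|.
Proof.
move=> cl fx.
have -> : porbits s = porbit s @: S :|: porbit s @: (~: S).
  rewrite /porbits -imsetU setUCr; apply/setP=> B.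
  by apply/imsetP/imsetP => -[x _ ->]; exists x.
rewrite cardsU.
have -> : porbit s @: S :&: porbit s @: (~: S) = set0.
  apply/setP=> B; rewrite !inE; apply/negbTE/andP=> [[/imsetP[u uS ->] /imsetP[v vS E]]].
  have := porbit_id s v; rewrite -E => /(subsetP (porbit_sub cl uS)).
  by rewrite inE in vS; move/negP: vS.
rewrite cards0 subn0; congr (_ + _); apply: card_in_imset => u v; rewrite !inE => uS vS.
by rewrite !porbit_fixed ?fx // => /set1_inj.
Qed.

Lemma porbits_mulr_tperm s x y : x != y -> x \in porbit s y ->
  #|porbits (s * tperm x y)| = #|porbits s| + 1.
Proof.
move=> xy xs; have := porbits_mul_tperm s^-1 x y.
rewrite /= porbitV xs xy /= addn0 porbitsV => <-.
by rewrite -porbitsV invMg tpermV.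
Qed.

End PermOrbits.

Section AddEdge.
Variables (T : finType) (e e' : rel T) (x y : T).
Hypothesis sym_e : connect_sym e.
Hypothesis e'_sub : forall u v, e' u v ->
  [|| e u v, (u == x) && (v == y) | (u == y) && (v == x)].

Lemma connect_add_edge u v : connect e' u v ->
  [|| connect e u v, connect e u x && connect e y v | connect e u y && connect e x v].
Proof.
have tr := @connect_trans _ e.
move=> c; apply: (@connect_propagate _ e' (fun v => [|| connect e u v,
  connect e u x && connect e y v | connect e u y && connect e x v]) u) c.
  by rewrite connect0.
move=> v1 v2 P12 /e'_sub /or3P [E|/andP[/eqP E1 /eqP E2]|/andP[/eqP E1 /eqP E2]].
- have c12 := connect1 E.
  case/or3P: P12 => [c|/andP[c1 c2]|/andP[c1 c2]].
  + by rewrite (tr _ _ _ c c12).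
  + by rewrite c1 (tr _ _ _ c2 c12) orbT.
  + by rewrite c1 (tr _ _ _ c2 c12) !orbT.
- subst v1 v2; case/or3P: P12 => [c|/andP[c1 c2]|/andP[c1 c2]].
  + by rewrite c connect0 orbT.
  + by rewrite (tr _ _ _ c1 (_ : connect e x y)) // -sym_e.
  + by rewrite c1.
- subst v1 v2; case/or3P: P12 => [c|/andP[c1 c2]|/andP[c1 c2]].
  + by rewrite c connect0 !orbT.
  + by rewrite c1.
  + by rewrite (tr _ _ _ c1 (_ : connect e y x)) // -sym_e.
Qed.

Lemma n_comp_add_edge : symmetric e' -> (forall u v, e u v -> connect e' u v) ->
  n_comp e T <= n_comp e' T + ~~ connect e x y.
Proof.
move=> syme' e_sub; have sym_e' := sym_connect_sym syme'.
case cxy: (connect e x y).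
  suff eqc : connect e =2 connect e' by rewrite (eq_n_comp eqc) addn0.
  move=> u v; apply/idP/idP; apply: connect_sub => {}u {}v; first exact: e_sub.
  case/e'_sub/or3P=> [/connect1 //|/andP[/eqP-> /eqP->] //|/andP[/eqP-> /eqP->]].
  by rewrite sym_e.
pose R := [set r | roots e r]; pose R' := [set r | roots e' r].
have -> : n_comp e T = #|R| by apply: eq_card => r; rewrite !inE andbT.
have -> : n_comp e' T = #|R'| by apply: eq_card => r; rewrite !inE andbT.
pose ry := fingraph.root e y.
rewrite (cardsD1 ry R) addnC; apply: leq_add; last by case: (ry \in R).
rewrite -(@card_in_imset _ _ (fingraph.root e')); last first.
  move=> r1 r2; rewrite !inE => /andP[n1 /eqP R1] /andP[n2 /eqP R2] /(fingraph.rootP sym_e').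
  case/connect_add_edge/or3P=> [c|/andP[c1 c2]|/andP[c1 c2]].
  - by rewrite -R1 -R2; apply/(fingraph.rootP sym_e).
  - by move: n2; rewrite /ry -R2 eq_sym (root_connect sym_e) c2.
  - by move: n1; rewrite /ry -R1 (root_connect sym_e) c1.
apply: subset_leq_card; apply/subsetP=> _ /imsetP[r _ ->].
by rewrite inE /roots root_root.
Qed.

End AddEdge.

Section MapGenus.
Variable T : finType.
Implicit Types s t : {perm T}.
Local Open Scope group_scope.

(* The undirected graph on T whose edges are the steps of s and of t; a
   combinatorial map (s, t) is connected when this graph is. *)
Definition perm_graph s t : rel T :=
  fun x y => [|| y == s x, x == s y, y == t x | x == t y].

Definition ncomp s t := n_comp (perm_graph s t) T.

Lemma perm_graph_sym s t : symmetric (perm_graph s t).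
Proof.
by move=> x y; apply/idP/idP => /or4P [] /eqP ->; rewrite /perm_graph eqxx ?orbT.
Qed.

Lemma porbitM_connect s t x y : y \in porbit (t * s) x -> connect (perm_graph s t) x y.
Proof.
case/porbitP=> i ->; elim: i => [|i IH]; first by rewrite expg0 perm1.
apply: (connect_trans IH); rewrite expgSr !permM.
apply: (@connect_trans _ _ (t (((t * s) ^+ i) x))); apply: connect1;
  by rewrite /perm_graph eqxx ?orbT.
Qed.

(* With t = 1 the components of the map are exactly the orbits of s. *)
Lemma card_porbits_ncomp1 s : #|porbits s| <= ncomp s 1.
Proof.
have sym_g := sym_connect_sym (perm_graph_sym s 1).
have -> : porbits s = porbit s @: [set x | roots (perm_graph s 1) x].
  apply/setP=> B; apply/imsetP/imsetP=> [[x _ ->]|[x _ ->]]; last by exists x.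
  exists (fingraph.root (perm_graph s 1) x); first by rewrite inE /roots (root_root sym_g).
  apply/eqP; rewrite eq_porbit_mem.
  suff orbit_const y : connect (perm_graph s 1) x y -> porbit s y = porbit s x.
    by rewrite orbit_const ?connect_root ?porbit_id.
  apply: (@connect_propagate _ _ (fun y => porbit s y = porbit s x)) => // u v <-.
  by case/or4P => /eqP ->; rewrite ?porbitS ?perm1.
apply: leq_trans (leq_imset_card _ _) _.
by apply: subset_leq_card; apply/subsetP=> x; rewrite !inE andbT.
Qed.

Definition moved t := [set z | t z != z].

Lemma involution_peel t x : t * t = 1 -> t x != x ->
  let t' := tperm x (t x) * t in
  [/\ t' * t' = 1, #|moved t'| < #|moved t|, t = tperm x (t x) * t'
    & forall z, t' z = if (z == x) || (z == t x) then z else t z].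
Proof.
move=> tt tx t'; have ttz z : t (t z) = z by rewrite -permM tt perm1.
have t'E z : t' z = if (z == x) || (z == t x) then z else t z.
  rewrite permM; case: (eqVneq z x) => [->|zx]; first by rewrite tpermL ttz.
  case: (eqVneq z (t x)) => [->|ztx /=]; first by rewrite tpermR.
  by rewrite tpermD // eq_sym.
split=> //.
- apply/permP => z; rewrite permM perm1 !t'E.
  case: (eqVneq z x) => [->|zx]; first by rewrite eqxx.
  case: (eqVneq z (t x)) => [->|ztx] /=; first by rewrite eqxx orbT.
  by rewrite -{1}[x]ttz !(inj_eq perm_inj) (negbTE ztx) (negbTE zx) ttz.
- rewrite (cardsD1 x (moved t)) inE tx add1n ltnS.
  apply/subset_leq_card/subsetP => z; rewrite !inE t'E.
  case: (eqVneq z x) => [->|zx]; first by rewrite eqxx.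
  by case: (eqVneq z (t x)) => [->|zy] /=; rewrite ?eqxx ?orbT.
- by rewrite mulgA tperm2 mul1g.
Qed.

(* Peeling the 2-cycle (x, t x) off t removes one edge from the map graph. *)
Lemma ncomp_peel s t x : t * t = 1 -> t x != x ->
  ncomp s (tperm x (t x) * t) <=
  ncomp s t + ~~ connect (perm_graph s (tperm x (t x) * t)) x (t x).
Proof.
set t' := tperm x (t x) * t => tt tx; have [_ _ _ t'E] := involution_peel tt tx.
have ttz z : t (t z) = z by rewrite -permM tt perm1.
have t'_off z : z != x -> z != t x -> t' z = t z.
  by move=> zx zy; rewrite t'E (negbTE zx) (negbTE zy).
apply: n_comp_add_edge; [exact/sym_connect_sym/perm_graph_sym| |
  exact: perm_graph_sym|].
- move=> u v /or4P [] /eqP E.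
  + by rewrite /perm_graph E eqxx.
  + by rewrite /perm_graph E eqxx orbT.
  + case: (eqVneq u x) => [ux|ux]; first by rewrite E ux !eqxx orbT.
    case: (eqVneq u (t x)) => [uy|uy]; first by rewrite E uy ttz !eqxx !orbT.
    by rewrite E -t'_off // /perm_graph eqxx !orbT.
  + case: (eqVneq v x) => [vx|vx]; first by rewrite E vx !eqxx !orbT.
    case: (eqVneq v (t x)) => [vy|vy]; first by rewrite E vy ttz !eqxx orbT.
    by rewrite E -t'_off // /perm_graph eqxx !orbT.
- move=> u v /or4P [] /eqP E.
  + by apply: connect1; rewrite /perm_graph E eqxx.
  + by apply: connect1; rewrite /perm_graph E eqxx orbT.
  + move: E; rewrite t'E; case: ifP => _ -> //.
    by apply: connect1; rewrite /perm_graph eqxx !orbT.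
  + move: E; rewrite t'E; case: ifP => _ -> //.
    by apply: connect1; rewrite /perm_graph eqxx !orbT.
Qed.

(* The genus inequality for combinatorial maps: for an involution t,
   z(s) + z(t) + z(ts) <= |T| + 2 c(s, t), where z counts orbits and c counts
   connected components (equality would define genus zero).  Induction on the
   number of 2-cycles of t: removing one changes z(t) by +1, z(ts) by -1 or
   +1, the latter only when the number of components may grow by one. *)
Theorem map_genus s t : t * t = 1 ->
  #|porbits s| + #|porbits t| + #|porbits (t * s)| <= #|T| + (2 * ncomp s t)%N.
Proof.
have [n] := ubnP #|moved t|; elim: n t => // n IH t lt_t tt.
case: (pickP [pred z | t z != z]) => [x /= tx|fixed]; last first.
  have -> : t = 1 by apply/permP => z; rewrite perm1; apply/eqP/negbFE/fixed.
  rewrite card_porbits1 mul1g; have := card_porbits_ncomp1 s; lia.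
have [tt' lt_t' tE _] := involution_peel tt tx.
set t' := _ * t in tt' lt_t' tE *.
have xy : x != t x by rewrite eq_sym.
have t'y : t' (t x) = t x by rewrite permM tpermR.
have IHt' := IH t' (leq_trans lt_t' lt_t) tt'.
have Et : #|porbits t| + 2 = #|porbits t'| + 1.
  have := porbits_mul_tperm t' x (t x).
  by rewrite /= porbit_fixed // inE (negbTE xy) /= -tE.
have Ets : #|porbits (t * s)| + (x \notin porbit (t' * s) (t x)).*2 =
           #|porbits (t' * s)| + 1.
  by have := porbits_mul_tperm (t' * s) x (t x); rewrite /= mulgA -tE xy.
have Ec := ncomp_peel s tt tx; rewrite -/t' in Ec.
have Hd : ~~ connect (perm_graph s t') x (t x) ==> (x \notin porbit (t' * s) (t x)).
  apply/implyP/contra => /porbitM_connect.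
  by rewrite (sym_connect_sym (perm_graph_sym s t')).
move: Ec Hd Et Ets IHt'; rewrite /ncomp -!muln2.
by case: connect; case: (x \in _) => //=; lia.
Qed.

End MapGenus.

Lemma face_closed (V : finType) (adj : rel V) (rot : V -> V -> V) p d :
  p \in faces adj rot -> d \in p -> fnext rot d \in p.
Proof.
case/imsetP=> d0 _ ->; rewrite !inE => c.
exact: connect_trans c (fconnect1 _ _).
Qed.

Lemma two_connected_neighbour (V : finType) (adj : rel V) :
  two_connected adj -> forall v, exists u, adj v u.
Proof.
case=> hV hconn _ v; have [z zv] : exists z, z != v.
  have : (0 < #|[set~ v]|)%N by rewrite cardsC1; lia.
  by case/card_gt0P => z; rewrite !inE => zv; exists z.
by apply: (connect_neq_step _ (hconn v z)); rewrite eq_sym.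
Qed.

Section RotationMap.
Variables (V : finType) (adj : rel V) (rot : V -> V -> V).
Hypothesis rs : rotation_system adj rot.
Local Open Scope group_scope.

Let adj_sym : symmetric adj. Proof. by case: rs. Qed.
Let adj_irr : irreflexive adj. Proof. by case: rs. Qed.
Let rot_adj v u : adj v u -> adj v (rot v u). Proof. by case: rs => _ _ H _ _; apply: H. Qed.
Let rot_inj v : {in [pred u | adj v u] &, injective (rot v)}. Proof. by case: rs. Qed.
Let rot_cyc v u w : adj v u -> adj v w -> fconnect (rot v) u w.
Proof. by case: rs => _ _ _ _ H; apply: H. Qed.

(* The rotation system as a combinatorial map on V * V: vperm turns a dart
   around its origin, eperm reverses it, and fperm = vperm \o eperm traces
   faces; all three fix the pairs that are not darts. *)
Definition vperm_fun (d : V * V) := if adj d.1 d.2 then (d.1, rot d.1 d.2) else d.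
Definition eperm_fun (d : V * V) := if adj d.1 d.2 then (d.2, d.1) else d.

Lemma vperm_fun_inj : injective vperm_fun.
Proof.
move=> [u v] [u' v']; rewrite /vperm_fun /=.
case: ifP => uv; case: ifP => uv'.
- by case=> E; subst u' => /(rot_inj uv uv') ->.
- by case=> E1 E2; subst u' v'; rewrite rot_adj in uv'.
- by case=> E1 E2; subst u v; rewrite rot_adj in uv.
- by [].
Qed.

Lemma eperm_fun_invol : involutive eperm_fun.
Proof.
move=> [u v]; rewrite /eperm_fun /=; case uv: (adj u v) => /=; last by rewrite uv.
by rewrite adj_sym uv.
Qed.

Definition vperm : {perm V * V} := perm vperm_fun_inj.
Definition eperm : {perm V * V} := perm (inv_inj eperm_fun_invol).
Definition fperm : {perm V * V} := eperm * vperm.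

Lemma vpermE z : vperm z = vperm_fun z. Proof. exact: permE. Qed.
Lemma epermE z : eperm z = eperm_fun z. Proof. exact: permE. Qed.

Lemma vperm_fst z : (vperm z).1 = z.1.
Proof. by rewrite vpermE /vperm_fun; case: ifP. Qed.

Lemma dart_vperm z : adj (vperm z).1 (vperm z).2 = adj z.1 z.2.
Proof. by rewrite vpermE /vperm_fun; case: ifP => // /rot_adj /= ->. Qed.

Lemma dart_eperm z : adj (eperm z).1 (eperm z).2 = adj z.1 z.2.
Proof. by rewrite epermE /eperm_fun; case: ifP => //= zz; rewrite adj_sym. Qed.

Lemma dart_fperm z : adj (fperm z).1 (fperm z).2 = adj z.1 z.2.
Proof. by rewrite permM dart_vperm dart_eperm. Qed.

Lemma vperm_fix z : ~~ adj z.1 z.2 -> vperm z = z.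
Proof. by rewrite vpermE /vperm_fun => /negbTE ->. Qed.

Lemma eperm_fix z : ~~ adj z.1 z.2 -> eperm z = z.
Proof. by rewrite epermE /eperm_fun => /negbTE ->. Qed.

Lemma fperm_fix z : ~~ adj z.1 z.2 -> fperm z = z.
Proof. by move=> nz; rewrite permM eperm_fix // vperm_fix. Qed.

Lemma fperm_fnext d : adj d.1 d.2 -> fperm d = fnext rot d.
Proof. by move=> dd; rewrite permM epermE /eperm_fun dd vpermE /vperm_fun /= adj_sym dd. Qed.

Section DartPerm.
Variable s : {perm V * V}.
Hypotheses (s_dart : forall z, adj (s z).1 (s z).2 = adj z.1 z.2)
           (s_fix : forall z, ~~ adj z.1 z.2 -> s z = z).

Lemma darts_perm_closed u : u \in darts adj -> s u \in darts adj.
Proof. by rewrite !inE s_dart. Qed.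

Lemma card_porbits_darts :
  #|porbits s| = #|porbit s @: darts adj| + #|~: darts adj|.
Proof.
apply: card_porbits_supp; first exact: darts_perm_closed.
by move=> u; rewrite inE; apply: s_fix.
Qed.
End DartPerm.

Lemma face_porbit d : adj d.1 d.2 -> face_of rot d = porbit fperm d.
Proof.
move=> dd; apply/setP => y; rewrite inE; apply/idP/idP.
  move=> c; suff /andP[] : (y \in porbit fperm d) && adj y.1 y.2 by [].
  apply: (@connect_propagate _ _ (fun y => (y \in porbit fperm d) && adj y.1 y.2) d)
    c; first by rewrite porbit_id.
  move=> u v /andP[ud du] /eqP <-; rewrite -fperm_fnext // dart_fperm du andbT.
  by rewrite -eq_porbit_mem -porbitS eq_porbit_mem in ud.
case/porbitP => i ->; elim: i => [|i IH]; first by rewrite expg0 perm1.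
have di : adj ((fperm ^+ i) d).1 ((fperm ^+ i) d).2.
  by elim: (i) => [|j IHj]; rewrite ?expg0 ?perm1 // expgSr permM dart_fperm.
by rewrite expgSr permM fperm_fnext //; apply: connect_trans IH (fconnect1 _ _).
Qed.

Lemma faces_porbit : faces adj rot = porbit fperm @: darts adj.
Proof. by apply: eq_in_imset => d; rewrite inE => /face_porbit. Qed.

Lemma faces_partition : partition (faces adj rot) (darts adj).
Proof.
by rewrite faces_porbit; apply/porbit_partition/darts_perm_closed/dart_fperm.
Qed.

Lemma face_dart p d : p \in faces adj rot -> d \in p -> adj d.1 d.2.
Proof.
move=> pf dp; have /and3P[/eqP cover _ _] := faces_partition.
suff : d \in darts adj by rewrite inE.
by rewrite -cover; apply/bigcupP; exists p.
Qed.

Lemma eperm_porbit d : adj d.1 d.2 -> porbit eperm d = [set d; eperm d].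
Proof.
move=> dd; apply/setP => y; rewrite !inE; apply/idP/idP.
  case/porbitP => i ->; elim: i => [|i IH]; first by rewrite expg0 perm1 eqxx.
  rewrite expgSr permM; case/orP: IH => /eqP ->; first by rewrite eqxx orbT.
  by rewrite !epermE eperm_fun_invol eqxx.
case/orP => /eqP ->; first exact: porbit_id.
by have := mem_porbit eperm 1 d; rewrite expg1.
Qed.

Lemma darts_even : #|darts adj| = (#|porbit eperm @: darts adj| * 2)%N.
Proof.
apply: card_uniform_partition; last exact/porbit_partition/darts_perm_closed/dart_eperm.
move=> _ /imsetP[[u v] uv ->]; rewrite inE /= in uv.
rewrite eperm_porbit // cards2 epermE /eperm_fun uv xpair_eqE andbC.
by case: eqP => // E; rewrite E adj_irr in uv.
Qed.

Lemma vperm_iter u v n : adj u v ->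
  iter n vperm (u, v) = (u, iter n (rot u) v) /\ adj u (iter n (rot u) v).
Proof.
move=> uv; elim: n => [|n [IH1 IH2]] //=.
by rewrite IH1 vpermE /vperm_fun /= IH2 (rot_adj IH2).
Qed.

Lemma vperm_same_origin d1 d2 : adj d1.1 d1.2 -> adj d2.1 d2.2 -> d1.1 = d2.1 ->
  d1 \in porbit vperm d2.
Proof.
case: d1 d2 => u v [u' w] /= uv uw E; subst u'.
apply/porbitP; exists (findex (rot u) w v); rewrite permX.
by have [-> _] := vperm_iter (findex (rot u) w v) uw; rewrite iter_findex ?rot_cyc.
Qed.

Lemma card_vertices_le : (forall v, exists u, adj v u) ->
  #|V| <= #|porbit vperm @: darts adj|.
Proof.
move=> hnb; pose f v := porbit vperm (v, xchoose (hnb v)).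
have finj : injective f.
  move=> v1 v2 E; have : (v1, xchoose (hnb v1)) \in f v2 by rewrite -E porbit_id.
  case/porbitP => i /(f_equal fst) /=.
  by elim: i => [|i IH]; rewrite ?expg0 ?perm1 // expgSr permM vperm_fst.
rewrite -cardsT -(card_imset [set: V] finj).
apply/subset_leq_card/subsetP=> _ /imsetP[v _ ->].
by apply: imset_f; rewrite inE /=; apply: xchooseP.
Qed.

Section SplitVertex.
Hypothesis tc : two_connected adj.
(* Re-routing the rotation at the origin w of two darts d1, d2 by a
   transposition, the resulting map stays connected on darts: by
   2-connectivity, G - w is connected. *)
Variables d1 d2 : V * V.
Hypothesis same_origin : d2.1 = d1.1.
Let w := d1.1.
Let split_graph := perm_graph (vperm * tperm d1 d2) eperm.

(* Away from w the rotation is unchanged, so darts around such a vertex are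
   connected. *)
Lemma split_rotation_away u v v' : u != w -> adj u v -> adj u v' ->
  connect split_graph (u, v) (u, v').
Proof.
move=> uw uv uv'; rewrite -(iter_findex (rot_cyc uv uv')).
elim: (findex _ v v') => [|k IH] //; apply: (connect_trans IH); apply: connect1.
have [E1 E2] := vperm_iter k uv.
have away z : z.1 != w -> (vperm * tperm d1 d2) z = vperm z.
  move=> zw; rewrite permM tpermD //.
    by apply: contra_neq zw => E; rewrite -(vperm_fst z) -E.
  by apply: contra_neq zw => E; rewrite -(vperm_fst z) -E same_origin.
by rewrite /split_graph /perm_graph away //= vpermE /vperm_fun /= E2 eqxx.
Qed.

Lemma split_reverse u v : adj u v -> connect split_graph (u, v) (v, u).
Proof.
by move=> uv; apply: connect1; rewrite /split_graph /perm_graph epermE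
  /eperm_fun /= uv eqxx !orbT.
Qed.

(* Hence all darts lie in a single component; the other components are the
   fixed points outside the darts. *)
Lemma split_vertex_ncomp :
  ncomp (vperm * tperm d1 d2) eperm <= #|~: darts adj| + 1.
Proof.
case: tc => hV _ h2.
have [u0 [z0 [u0w z0w u0z0]]] :
    exists u0 z0, [/\ u0 \in [set~ w], z0 \in [set~ w] & u0 != z0].
  by apply/card_gt1P; rewrite cardsC1; lia.
rewrite !inE in u0w z0w.
have [v0 /and3P [u0v0 _ _]] := connect_neq_step u0z0 (h2 w u0 z0 u0w z0w).
have to_u0 u : u != w -> forall v, adj u v -> connect split_graph (u, v) (u0, v0).
  move=> uw; apply: (@connect_propagate _ _ (fun u => forall v, adj u v ->
    connect split_graph (u, v) (u0, v0)) _ _ _ _ (h2 w u0 u u0w uw)).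
    by move=> v u0v; apply: split_rotation_away.
  move=> a a' Pa /and3P [aa' aw a'w] v a'v.
  apply: (connect_trans (split_rotation_away a'w a'v (_ : adj a' a))).
    by rewrite adj_sym.
  by apply: (connect_trans (split_reverse _)); [rewrite adj_sym | exact: Pa].
have all_darts d : adj d.1 d.2 -> connect split_graph d (u0, v0).
  case: d => a b /= ab; case: (eqVneq a w) => [aw|aw]; last exact: to_u0.
  have bw : b != w by rewrite -aw; apply: contraTneq ab => ->; rewrite adj_irr.
  by apply: (connect_trans (split_reverse ab)); apply: to_u0; rewrite // adj_sym.
have sym_split : connect_sym split_graph by apply/sym_connect_sym/perm_graph_sym.
pose r0 := fingraph.root split_graph (u0, v0).
apply: (@leq_trans #|~: darts adj :|: [set r0]|); last first.
  by rewrite -(cards1 r0) leq_card_setU.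
apply/subset_leq_card/subsetP=> r; rewrite !inE andbT => /eqP rr.
case dr: (adj r.1 r.2) => //=; apply/eqP; rewrite -rr.
exact/(fingraph.rootP sym_split)/all_darts.
Qed.
End SplitVertex.

(* In a 2-connected map of genus 0 no face boundary passes twice through the
   same vertex: otherwise splitting that vertex along the face would produce a
   connected map with one more vertex orbit and one more face, violating the
   genus inequality. *)
Lemma face_simple : two_connected adj -> genus0 adj rot ->
  forall p, p \in faces adj rot ->
  forall d1 d2, d1 \in p -> d2 \in p -> d1.1 = d2.1 -> d1 = d2.
Proof.
move=> tc g0 p pf d1 d2 d1p d2p e12; apply/eqP/negPn/negP => n12.
have [dd1 dd2] := (face_dart pf d1p, face_dart pf d2p).
have vorb : d1 \in porbit vperm d2 by apply: vperm_same_origin.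
have forb : d1 \in porbit fperm d2.
  move: pf; rewrite faces_porbit => /imsetP[d0 _ pE]; rewrite pE in d1p d2p.
  by have /eqP -> : porbit fperm d2 == porbit fperm d0 by rewrite eq_porbit_mem.
have ee : eperm * eperm = 1.
  by apply/permP => z; rewrite permM !epermE eperm_fun_invol perm1.
have G := map_genus (vperm * tperm d1 d2) ee.
rewrite porbits_mulr_tperm // mulgA porbits_mulr_tperm // in G.
rewrite (card_porbits_darts dart_vperm vperm_fix) (card_porbits_darts dart_eperm
  eperm_fix) (card_porbits_darts dart_fperm fperm_fix) -faces_porbit in G.
have := split_vertex_ncomp tc (esym e12).
have : #|darts adj| + #|~: darts adj| = #|{: V * V}| := cardsC (darts adj).
have := darts_even.
have := card_vertices_le (two_connected_neighbour tc).
move: G g0; rewrite /genus0.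
set S1 := #|porbit vperm @: _|; set S2 := #|porbit eperm @: _|.
set F := #|faces adj rot|; set D := #|darts adj|; set N := #|~: darts adj|.
set TT := #|{: V * V}|; set K := ncomp _ _; lia.
Qed.

End RotationMap.

Lemma card_darts_faces (V : finType) (adj : rel V) (rot : V -> V -> V) pinf :
  rotation_system adj rot -> pinf \in faces adj rot ->
  #|darts adj| = (#|pinf| + \sum_(p in bounded_faces adj rot pinf) #|p|)%N.
Proof.
by move=> rs hp; rewrite (card_partition (faces_partition rs)) (big_setD1 _ hp).
Qed.

Local Open Scope ring_scope.

Lemma bface_le (V : finType) (b : V -> int) (p : {set V * V}) v :
  v \in face_vertices p -> bface b p <= b v.
Proof.
move=> vp; rewrite /bface; case: pickP => [v0 _|none]; last by rewrite none in vp.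
by rewrite (bigD1 v) //= ge_min lexx.
Qed.

Lemma Bval_lower_bound (V : finType) (adj : rel V) (rot : V -> V -> V)
    (pinf : {set V * V}) (a : {set V * V} -> int) (b : V -> int) :
  rotation_system adj rot -> genus0 adj rot -> pinf \in faces adj rot ->
  (forall w, 1 <= b w) ->
  (forall p, p \in bounded_faces adj rot pinf -> a p = -1) ->
  2 + (#|pinf|)%:Z <= Bval adj rot pinf a b.
Proof.
move=> rs g0 hp b_ge1 a_eq; set P := bounded_faces adj rot pinf.
rewrite /Bval (eq_bigr (fun p => 2 - (face_length p)%:Z)); last first.
  by move=> p pb; rewrite a_eq // mulrN1 opprB.
rewrite sumrB sumr_const.
have -> : \sum_(p in P) (face_length p)%:Z = (\sum_(p in P) face_length p)%N%:Z.
  by rewrite -natz natr_sum; apply: eq_bigr => p _; rewrite natz.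
have -> : (2 : int) *+ #|P| = (#|P|)%:Z * 2 by rewrite pmulrn mulrzz; lia.
have sum_b : (#|V|)%:Z <= \sum_v b v.
  have : \sum_(v : V) (1 : int) <= \sum_v b v by apply: ler_sum => v _; exact: b_ge1.
  by rewrite sumr_const natz.
have len_le : (\sum_(p in P) face_length p <= \sum_(p in P) #|p|)%N.
  by apply: leq_sum => p _; apply: leq_imset_card.
have card_faces : #|faces adj rot| = (#|P| + 1)%N.
  by rewrite (cardsD1 pinf) hp addnC.
have := card_darts_faces rs hp; have := darts_even rs; move: g0 sum_b len_le card_faces.
rewrite /genus0 -/P; set L := (\sum_(p in P) face_length p)%N.
set S := (\sum_(p in P) #|p|)%N; set SB := \sum_v b v; lia.
Qed.

Section Labelling.
Variables (V : finType) (adj : rel V) (rot : V -> V -> V)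
  (pinf : {set V * V}) (b : V -> int).
Hypothesis edge_min : forall p, p \in bounded_faces adj rot pinf ->
  forall d, d \in p -> (b d.1 - bface b p) * (b d.2 - bface b p) = 0.

Definition good_edge u v := [&& 1 <= b u, 1 <= b v & (b u == 1) || (b v == 1)].

Lemma good_edge_sym u v : good_edge u v = good_edge v u.
Proof. by rewrite /good_edge andbCA orbC. Qed.

Lemma face_good p d : p \in bounded_faces adj rot pinf -> d \in p ->
  good_edge d.1 d.2 -> bface b p = 1 /\ forall e, e \in p -> good_edge e.1 e.2.
Proof.
move=> pb dp gd; have pf : p \in faces adj rot by move: pb; rewrite inE => /andP[].
have ends_ge e : e \in p -> bface b p <= b e.1 /\ bface b p <= b e.2.
  move=> ep; split; apply: bface_le; first exact: imset_f.
  exact: (imset_f fst (face_closed pf ep)).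
have min_end e : e \in p -> bface b p = b e.1 \/ bface b p = b e.2.
  move=> ep; move/eqP: (edge_min pb ep); rewrite mulf_eq0 !subr_eq0.
  by case/orP => /eqP ->; [left|right].
have bp1 : bface b p = 1.
  have [l1 l2] := ends_ge _ dp; move: gd; rewrite /good_edge.
  by case/and3P => g1 g2 /orP [/eqP g3|/eqP g3]; case: (min_end _ dp) => E; lia.
split=> // e ep; have [l1 l2] := ends_ge _ ep; rewrite bp1 in l1 l2.
by rewrite /good_edge l1 l2 /=; case: (min_end _ ep) => <-; rewrite bp1 eqxx ?orbT.
Qed.

Hypotheses (rs : rotation_system adj rot) (hp : pinf \in faces adj rot).
Hypothesis pinf_simple :
  forall d1 d2, d1 \in pinf -> d2 \in pinf -> d1.1 = d2.1 -> d1 = d2.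

Let adj_sym : symmetric adj. Proof. by case: rs. Qed.
Let rot_adj v u : adj v u -> adj v (rot v u). Proof. by case: rs => _ _ H _ _; apply: H. Qed.
Let rot_inj v : {in [pred u | adj v u] &, injective (rot v)}.
Proof. by case: rs. Qed.
Let rot_cyc v u w : adj v u -> adj v w -> fconnect (rot v) u w.
Proof. by case: rs => _ _ _ _ H; apply: H. Qed.

(* Turning around w from x to rot w x crosses the face containing the dart
   (x, w); if that face is bounded, goodness is transmitted. *)
Lemma good_step w x : adj w x -> (x, w) \notin pinf ->
  good_edge x w = good_edge w (rot w x).
Proof.
move=> wx nb; set q := face_of rot (x, w).
have qf : q \in faces adj rot by apply: imset_f; rewrite inE /= adj_sym.
have xq : (x, w) \in q by rewrite inE connect0.
have qb : q \in bounded_faces adj rot pinf.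
  by rewrite !inE qf andbT; apply: contraNneq nb => <-.
have nq : (w, rot w x) \in q := face_closed qf xq.
apply/idP/idP => g; first by have [_ /(_ _ nq)] := face_good qb xq g.
by have [_ /(_ _ xq)] := face_good qb nq g.
Qed.

Lemma pinf_enters_once w z z' : adj w z -> adj w z' ->
  (z, w) \in pinf -> (z', w) \in pinf -> z = z'.
Proof.
move=> wz wz' zp z'p; apply: (rot_inj wz wz').
by case: (pinf_simple (face_closed hp zp) (face_closed hp z'p) erefl).
Qed.

(* All edges at a vertex w are simultaneously good or not: going around w
   from the corner where the unbounded face enters, every step crosses a
   bounded face. *)
Lemma vertex_good_const w u u' : adj w u -> adj w u' ->
  good_edge w u = good_edge w u'.
Proof.
move=> wu; have [u0 [wu0 u0_only]] : exists u0, adj w u0 /\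
    forall z, adj w z -> z != u0 -> (z, w) \notin pinf.
  case: (pickP [pred z | adj w z && ((z, w) \in pinf)]) => [z /andP[wz zp]|none].
    exists z; split=> // z' wz' nz; apply: contra nz => z'p.
    by rewrite (pinf_enters_once wz' wz z'p zp).
  by exists u; split=> // z wz _; have := none z; rewrite /= wz => /negbT.
suff around y : adj w y -> good_edge w y = good_edge w (rot w u0).
  by move=> wu'; rewrite (around u) // (around u').
move=> wy; suff [] : adj w y /\ good_edge w y = good_edge w (rot w u0) by [].
apply: (@fconnect_ind_avoid _ (rot w)
  (fun y => adj w y /\ good_edge w y = good_edge w (rot w u0)) u0).
- by split; first exact: rot_adj.
- move=> z zu0 [wz <-]; split; first exact: rot_adj.
  by rewrite -(good_step wz (u0_only _ wz zu0)) good_edge_sym.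
- exact: rot_cyc (rot_adj wu0) wy.
Qed.

Lemma all_edges_good : (forall u v, connect adj u v) ->
  forall d, adj d.1 d.2 -> good_edge d.1 d.2 -> forall w v, adj w v -> good_edge w v.
Proof.
move=> hconn d dd gd w; apply: (@connect_propagate _ adj
  (fun u => forall v, adj u v -> good_edge u v) d.1) (hconn _ _).
  by move=> v dv; rewrite (vertex_good_const dv dd).
move=> u u' good_u uu' v u'v.
by rewrite (vertex_good_const u'v (_ : adj u' u)) 1?adj_sym // good_edge_sym good_u.
Qed.

End Labelling.

Unset Implicit Arguments.

Theorem lemma4p1 (V : finType) (adj : rel V) (rot : V -> V -> V)
  (pinf : {set V * V}) (a : {set V * V} -> int) (b : V -> int) :
  plane_graph adj rot pinf ->
  admissible adj rot pinf a b ->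
  (exists d, d \in pinf /\ b d.1 = 1 /\ b d.2 = 1) ->
  (forall p, p \in bounded_faces adj rot pinf -> a p + bface b p = 0) ->
  (forall p, p \in bounded_faces adj rot pinf -> forall d, d \in p ->
     (b d.1 - bface b p) * (b d.2 - bface b p) = 0) ->
  (forall w, 1 <= b w)
  /\ (forall p, p \in bounded_faces adj rot pinf -> a p = -1)
  /\ 2 + (#|face_vertices pinf|)%:Z <= Bval adj rot pinf a b.
Proof.
move=> [rs tc g0 hp] _ [d0 [d0p [b1 b2]]] a_min edge_min.
have hconn : forall u v, connect adj u v by case: tc.
have good w v : adj w v -> good_edge b w v.
  apply: (all_edges_good edge_min rs hp (face_simple rs tc g0 hp) hconn
    (face_dart rs hp d0p)).
  by rewrite /good_edge b1 b2 lexx eqxx.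
have b_ge1 w : 1 <= b w.
  by have [u /good /and3P[]] := two_connected_neighbour tc w.
have a_eq p : p \in bounded_faces adj rot pinf -> a p = -1.
  move=> pb; have /imsetP[d dd pE] : p \in faces adj rot by case/setD1P: pb.
  have dp : d \in p by rewrite pE inE connect0.
  rewrite inE in dd; have [bp1 _] := face_good edge_min pb dp (good _ _ dd).
  by have := a_min p pb; rewrite bp1; lia.
split=> //; split=> //; apply: le_trans (Bval_lower_bound rs g0 hp b_ge1 a_eq).
by rewrite lerD2l lez_nat leq_imset_card.
Qed.
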